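(* Let $\ell>0$ and let $B\subset\mathbb R^d$ be a closed Euclidean ball of radius at least $3\ell d^2$ with $0\in\partial B$. Then there exists $z\in I$ such that $K_\ell(z)$ is contained in the interior of $B$.
   Context: $I:=\{z\in\mathbb Z^d:|z|_\infty=d\}$, where $|\cdot|_\infty$ is the sup norm; $K_\ell(z):=z\ell+[-\ell/2,\ell/2]^d$. *)

From mathcomp Require Import all_boot all_order all_algebra.
From mathcomp Require Import reals.
Set Implicit Arguments. Unset Strict Implicit. Unset Printing Implicit Defensive.
Import Order.TTheory GRing.Theory Num.Theory.
Local Open Scope ring_scope.

Section Defs.
Variables (R : realType) (d : nat).

Definition enorm (x : 'I_d -> R) : R := Num.sqrt (\sum_(i < d) x i ^+ 2).
Definition edist (x y : 'I_d -> R) : R := enorm (fun i => x i - y i).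

Definition cball (c : 'I_d -> R) (r : R) : ('I_d -> R) -> Prop :=
  fun x => edist x c <= r.

Definition einterior (A : ('I_d -> R) -> Prop) : ('I_d -> R) -> Prop :=
  fun x => exists2 e : R, 0 < e & forall y, edist y x < e -> A y.
Definition eboundary (A : ('I_d -> R) -> Prop) : ('I_d -> R) -> Prop :=
  fun x => forall e : R, 0 < e ->
    (exists2 y, A y & edist y x < e) /\ (exists2 y, ~ A y & edist y x < e).

Definition supnormZ (z : 'I_d -> int) : nat := (\max_(i < d) absz (z i))%N.

Definition Iset (z : 'I_d -> int) : Prop := supnormZ z = d.

Definition Kcube (l : R) (z : 'I_d -> int) : ('I_d -> R) -> Prop :=
  fun x => forall i, `|x i - (z i)%:~R * l| <= l / 2.

End Defs.

From mathcomp Require Import all_boot all_order all_algebra.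
From mathcomp Require Import reals.
From mathcomp Require Import ring lra.
Import Order.TTheory GRing.Theory Num.Theory.
Local Open Scope ring_scope.
Set Implicit Arguments. Unset Strict Implicit.

(* As 0 lies on the sphere, |c| = r, so some coordinate has |c_i| >= r / sqrt d.
   With p := +-d l e_i carrying the sign of c_i,
   |p - c|^2 = r^2 + d^2 l^2 - 2 d l |c_i| <= r^2 + d^2 l^2 - 2 sqrt d l r,
   which is below (r - sqrt d l / 2)^2 because r >= 3 l d^2.  The cube K_l(z)
   for z = +-d e_i is centred at p with half-diagonal sqrt d l / 2, so by the
   triangle inequality it lies in the open ball. *)

Lemma CauchySchwarz_sum (R : realDomainType) (I : finType) (u v : I -> R) :
  (\sum_i u i * v i) ^+ 2 <= (\sum_i u i ^+ 2) * (\sum_i v i ^+ 2).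
Proof.
rewrite expr2 !big_distrlr /= -subr_ge0 -sumrB.
under eq_bigr do rewrite -sumrB.
set L := (X in 0 <= X).
have Lagrange : \sum_i \sum_j (u i * v j - u j * v i) ^+ 2 = L + L.
  rewrite {2}/L [X in _ = _ + X]exchange_big -big_split /=; apply: eq_bigr => i _.
  rewrite -big_split /=; apply: eq_bigr => j _; ring.
have : 0 <= L + L by rewrite -Lagrange; do 2![apply: sumr_ge0 => ? _]; exact: sqr_ge0.
lra.
Qed.

Section Euclid.
Variables (R : realType) (d : nat).
Implicit Types (u v x y c : 'I_d -> R) (r a : R).

Lemma enorm_ge0 u : 0 <= enorm u.
Proof. exact: sqrtr_ge0. Qed.

Lemma sqr_enorm u : enorm u ^+ 2 = \sum_i u i ^+ 2.
Proof. by rewrite sqr_sqrtr // sumr_ge0 // => i _; rewrite sqr_ge0. Qed.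

Lemma eq_enorm u v : u =1 v -> enorm u = enorm v.
Proof. by move=> uv; rewrite /enorm; under eq_bigr do rewrite uv. Qed.

Lemma dot_le_enorm u v : \sum_i u i * v i <= enorm u * enorm v.
Proof.
apply: le_trans (ler_norm _) _.
rewrite -ler_sqr ?nnegrE ?normr_ge0 ?mulr_ge0 ?enorm_ge0 //.
by rewrite -normrX ger0_norm ?sqr_ge0 // exprMn !sqr_enorm CauchySchwarz_sum.
Qed.

Lemma enormD u v : enorm (fun i => u i + v i) <= enorm u + enorm v.
Proof.
rewrite -ler_sqr ?nnegrE ?addr_ge0 ?enorm_ge0 // sqr_enorm sqrrD !sqr_enorm.
have -> : \sum_i (u i + v i) ^+ 2
    = \sum_i u i ^+ 2 + 2 * (\sum_i u i * v i) + \sum_i v i ^+ 2.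
  by rewrite mulr_sumr -!big_split; apply: eq_bigr => i _ /=; ring.
have := dot_le_enorm u v; lra.
Qed.

Lemma edist_sym x y : edist x y = edist y x.
Proof. by rewrite /edist /enorm; under eq_bigr do rewrite -sqrrN opprB. Qed.

Lemma edist_triangle x y c : edist x c <= edist x y + edist y c.
Proof.
rewrite /edist (@eq_enorm _ (fun i => (x i - y i) + (y i - c i))) ?enormD //.
by move=> i; rewrite addrA subrK.
Qed.

Lemma enorm_le_sup u a : 0 <= a -> (forall i, `|u i| <= a) ->
  enorm u <= Num.sqrt d%:R * a.
Proof.
move=> a0 ua; rewrite -(ger0_norm a0) -sqrtr_sqr -sqrtrM ?ler0n //.
rewrite ler_sqrt ?mulr_ge0 ?ler0n ?sqr_ge0 //.
apply: (@le_trans _ _ (\sum_(i < d) a ^+ 2)); last by rewrite sumr_const card_ord mulr_natl.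
apply: ler_sum => i _.
by rewrite -real_normK ?num_real // ler_sqr ?nnegrE ?normr_ge0.
Qed.

Lemma eboundary_cball c r x : eboundary (cball c r) x -> edist x c = r.
Proof.
move=> bx; apply/eqP; rewrite eq_le; apply/andP; split.
- apply/ler_addgt0Pl => e /bx [[y ycr yx] _].
  apply: le_trans (edist_triangle x y c) _.
  by apply: lerD => //; rewrite edist_sym ltW.
- apply/ler_addgt0Pl => e /bx [_ [y /negP ycr yx]].
  rewrite -ltNge in ycr; apply: le_trans (ltW ycr) _.
  by apply: le_trans (edist_triangle y x c) _; rewrite lerD2r ltW.
Qed.

Lemma cball_interior c r x : edist x c < r -> einterior (cball c r) x.
Proof.
move=> xr; exists (r - edist x c) => [|y yx]; first by rewrite subr_gt0.
by apply: le_trans (edist_triangle y x c) _; lra.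
Qed.

Lemma sqr_edist_update x y c i : (forall j, j != i -> x j = y j) ->
  edist x c ^+ 2 = edist y c ^+ 2 + (x i - c i) ^+ 2 - (y i - c i) ^+ 2.
Proof.
move=> xy; rewrite !sqr_enorm (bigD1 i) //= [in RHS](bigD1 i) //=.
by rewrite (eq_bigr _ (fun j ji => congr1 (fun t => (t - c j) ^+ 2) (xy j ji))); ring.
Qed.

Lemma Kcube_edist_center l z x : 0 <= l -> Kcube l z x ->
  edist x (fun i => (z i)%:~R * l) <= Num.sqrt d%:R * (l / 2).
Proof. by move=> l0 xz; apply: enorm_le_sup; rewrite ?divr_ge0. Qed.

End Euclid.

Lemma supnormZ_delta d (i : 'I_d) (k : int) :
  supnormZ (fun j => if j == i then k else 0) = absz k.
Proof.
apply/eqP; rewrite eqn_leq; apply/andP; split.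
  by apply/bigmax_leqP => j _; case: eqP.
by apply: leq_trans (leq_bigmax i); rewrite eqxx.
Qed.

Lemma tangent_ball_estimate (R : realFieldType) (s l m r t : R) :
  1 <= s -> 0 < l -> 3 * l * s ^+ 4 <= r -> r <= s * m -> 0 <= t ->
  t ^+ 2 = r ^+ 2 + (s ^+ 2 * l - m) ^+ 2 - m ^+ 2 -> s * (l / 2) + t < r.
Proof.
move=> s1 l0 rl rm t0 tE.
have sl0 : 0 < s * l by rewrite mulr_gt0 //; lra.
have s4 : s <= s ^+ 4 by rewrite exprS ler_peMr ?exprn_ege1 //; lra.
have lr : s * (l / 2) < r by nra.
have slr : s ^+ 4 * l ^+ 2 < s * l * r.
  have : s * l * (3 * l * s ^+ 4) <= s * l * r by rewrite ler_pM2l.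
  have : 0 < s ^+ 4 * l ^+ 2 by rewrite mulr_gt0 ?exprn_gt0 //; lra.
  nra.
have slm : s * l * r <= s * l * (s * m) by rewrite ler_pM2l.
have : t < r - s * (l / 2).
  rewrite -ltr_sqr ?nnegrE ?subr_ge0 ?(ltW lr) // tE.
  have : 0 <= (s * l) ^+ 2 by rewrite sqr_ge0.
  nra.
lra.
Qed.

Theorem lemma9p2 (R : realType) (d : nat) (hd : (0 < d)%N) (l : R) (hl : 0 < l)
    (c : 'I_d -> R) (r : R) (hr : 3 * l * (d ^ 2)%:R <= r)
    (h0 : eboundary (cball c r) (fun _ => 0)) :
  exists z : 'I_d -> int, Iset z /\
    (forall x, Kcube l z x -> einterior (cball c r) x).
Proof.
have rc : edist (fun _ => 0) c = r := eboundary_cball h0.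
have [i0 _ i0max] := arg_maxP (fun i => `|c i|) (isT : xpredT (Ordinal hd)).
pose z i := if i == i0 then (if 0 <= c i0 then d%:Z else - d%:Z) else 0.
exists z; split=> [|x xz].
  by rewrite /Iset supnormZ_delta; case: ifP; rewrite ?abszN.
set s := Num.sqrt (d%:R : R).
have s2 : s ^+ 2 = d%:R by rewrite sqr_sqrtr ?ler0n.
have s1 : 1 <= s by rewrite -sqrtr1 ler_sqrt // ler1n.
set p := fun i => (z i)%:~R * l.
apply: cball_interior; apply: le_lt_trans (edist_triangle x p c) _.
apply: le_lt_trans (lerD (Kcube_edist_center (ltW hl) xz) (lexx _)) _.
apply: (tangent_ball_estimate (m := `|c i0|)) => //; rewrite ?enorm_ge0 //.
- by rewrite -[4%N]/(2 * 2)%N exprM s2 -natrX.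
- rewrite -rc; apply: enorm_le_sup => [|i]; first exact: normr_ge0.
  by rewrite sub0r normrN; apply: i0max.
- rewrite (@sqr_edist_update _ _ p (fun _ => 0) c i0) => [|j ji]; last first.
    by rewrite /p /z (negbTE ji) mul0r.
  rewrite rc /p /z eqxx s2 sub0r sqrrN -(real_normK (num_real (c i0))).
  case: (lerP 0 (c i0)) => c0.
    by rewrite -pmulrn ger0_norm.
  by rewrite intrN -pmulrn ltr0_norm // mulNr -opprD sqrrN opprK.
Qed.
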